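(* Let $S$ be a finite $0$-rectangular band whose non-zero $\mathscr{D}$-class $D=R\times C$ has $m$ rows and $n$ columns, and put $a=n/m$. Suppose that $S$ has a permutation matching. Then for any collection $T$ of $t$ rows of $D$ $(1\le t\le m)$, \[ |\{c\in C: c\cap E(T)\neq\emptyset\}|\ \ge\ ta, \] and for any collection $T$ of $t$ columns of $D$ $(1\le t\le n)$, \[ |\{r\in R: r\cap E(T)\neq\emptyset\}|\ \ge\ \frac{t}{a}. \]
   Context: A finite $0$-rectangular band with $m$ rows and $n$ columns is described as follows: $S=(R\times C)\cup\{0\}$ with $R=\{1,\dots,m\}$ (rows), $C=\{1,\dots,n\}$ (columns), and a set $E\subseteq R\times C$ meeting every row and every column; multiplication is $(i,j)(k,l)=(i,l)$ if $(k,j)\in E$ and $0$ otherwise, with $0$ a zero. Then $E$ is exactly the set of non-zero idempotents, $D=R\times C$ is the non-zero $\mathscr{D}$-class, a row is the set $\{i\}\times C$ and a column is $R\times\{j\}$. For a set $T$ of rows (resp. columns), $E(T)$ denotes the set of idempotents lying in the union of the members of $T$; a column $c$ (resp. row $r$) is regarded as a subset of $D$. For $x\in S$, $V(x)=\{y: xyx=x,\ yxy=y\}$; a permutation matching of $S$ is a bijection $\phi:S\to S$ with $\phi(x)\in V(x)$ for all $x$. *)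

From mathcomp Require Import all_boot all_order all_algebra.
Set Implicit Arguments. Unset Strict Implicit. Unset Printing Implicit Defensive.

(* Finite 0-rectangular band with rows 'I_m, columns 'I_n and idempotent set E.
   Elements: None = 0, Some (i, j) = (i, j). *)
Definition rb_mul (m n : nat) (E : {set 'I_m * 'I_n})
    (x y : option ('I_m * 'I_n)) : option ('I_m * 'I_n) :=
  match x, y with
  | Some (i, j), Some (k, l) => if (k, j) \in E then Some (i, l) else None
  | _, _ => None
  end.

Definition rb_inverse (m n : nat) (E : {set 'I_m * 'I_n})
    (x y : option ('I_m * 'I_n)) : Prop :=
  rb_mul E (rb_mul E x y) x = x /\ rb_mul E (rb_mul E y x) y = y.

Definition permutation_matching (m n : nat) (E : {set 'I_m * 'I_n})
    (phi : option ('I_m * 'I_n) -> option ('I_m * 'I_n)) : Prop :=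
  bijective phi /\ forall x, rb_inverse E x (phi x).

Definition cols_meeting (m n : nat) (E : {set 'I_m * 'I_n}) (T : {set 'I_m})
  : {set 'I_n} := [set c | [exists r in T, (r, c) \in E]].

Definition rows_meeting (m n : nat) (E : {set 'I_m * 'I_n}) (T : {set 'I_n})
  : {set 'I_m} := [set r | [exists c in T, (r, c) \in E]].

From mathcomp Require Import all_boot all_order all_algebra.
Import Order.TTheory GRing.Theory Num.Theory.
Set Implicit Arguments. Unset Strict Implicit. Unset Printing Implicit Defensive.
Local Open Scope ring_scope.

(* A permutation matching sends each non-zero element (i, j) to some (k, l)
   with (k, j) and (i, l) idempotent, and it does so injectively. The map
   therefore injects T x C into R x (columns meeting E(T)), giving
   t n <= m |cols|, and injects R x T into (rows meeting E(T)) x C. *)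

Lemma rb_inverse_Some (m n : nat) (E : {set 'I_m * 'I_n}) i j y :
  rb_inverse E (Some (i, j)) y ->
  exists k l, y = Some (k, l) /\ (k, j) \in E /\ (i, l) \in E.
Proof.
case: y => [[k l]|]; rewrite /rb_inverse /=; last by case.
case: ifP => kjE [] //=; case: ifP => ilE // _ _.
by exists k, l.
Qed.

Lemma permutation_matching_injD (m n : nat) (E : {set 'I_m * 'I_n}) phi :
  permutation_matching E phi ->
  exists2 g : 'I_m * 'I_n -> 'I_m * 'I_n, injective g &
    forall i j, ((g (i, j)).1, j) \in E /\ (i, (g (i, j)).2) \in E.
Proof.
move=> [[psi phiK _] phi_inv].
pose g p := odflt p (phi (Some p)).
have phi_g p :
    phi (Some p) = Some (g p) /\ ((g p).1, p.2) \in E /\ (p.1, (g p).2) \in E.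
  case: p => i j.
  have [k [l [phi_ij idem_kl]]] := rb_inverse_Some (phi_inv (Some (i, j))).
  by rewrite /g phi_ij.
exists g => [p q gpq | i j]; last exact: (phi_g (i, j)).2.
have := congr1 psi (phi_g p).1.
by rewrite gpq -(phi_g q).1 !phiK => -[].
Qed.

Lemma leq_card_inj_homo (A B : finType) (X : {set A}) (Y : {set B}) (g : A -> B) :
  injective g -> {homo g : x / x \in X >-> x \in Y} -> (#|X| <= #|Y|)%N.
Proof.
move=> g_inj gXY; rewrite -(card_imset X g_inj); apply: subset_leq_card.
by apply/subsetP => _ /imsetP [x Xx ->]; apply: gXY.
Qed.

Section InjectiveMatching.

Variables (m n : nat) (E : {set 'I_m * 'I_n}) (g : 'I_m * 'I_n -> 'I_m * 'I_n).
Hypothesis g_inj : injective g.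
Hypothesis g_idem : forall i j, ((g (i, j)).1, j) \in E /\ (i, (g (i, j)).2) \in E.

Lemma card_cols_meeting (T : {set 'I_m}) : (#|T| * n <= m * #|cols_meeting E T|)%N.
Proof.
have: (#|setX T [set: 'I_n]| <= #|setX [set: 'I_m] (cols_meeting E T)|)%N.
  apply: (leq_card_inj_homo g_inj) => -[i j]; rewrite !inE andbT => iT.
  by apply/existsP; exists i; rewrite iT (g_idem i j).2.
by rewrite !cardsX !cardsT !card_ord.
Qed.

Lemma card_rows_meeting (T : {set 'I_n}) : (m * #|T| <= #|rows_meeting E T| * n)%N.
Proof.
have: (#|setX [set: 'I_m] T| <= #|setX (rows_meeting E T) [set: 'I_n]|)%N.
  apply: (leq_card_inj_homo g_inj) => -[i j]; rewrite !inE /= => jT.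
  by rewrite andbT; apply/existsP; exists j; rewrite jT (g_idem i j).1.
by rewrite !cardsX !cardsT !card_ord.
Qed.

End InjectiveMatching.

(* No positivity hypothesis on d is needed, since x / 0 = 0. *)
Lemma ler_nat_mul_ratio (R : numFieldType) (x y c d : nat) :
  (x * c <= y * d)%N -> x%:R * (c%:R / d%:R) <= y%:R :> R.
Proof.
case: d => [|d] le_xc_yd; first by rewrite invr0 mulr0 mulr0.
by rewrite mulrA ler_pdivrMr ?ltr0Sn // -!natrM ler_nat.
Qed.

Theorem lemma2p2 (m n : nat) (E : {set 'I_m * 'I_n}) :
  (forall i : 'I_m, exists j : 'I_n, (i, j) \in E) ->
  (forall j : 'I_n, exists i : 'I_m, (i, j) \in E) ->
  (exists phi, permutation_matching E phi) ->
  let a : rat := n%:R / m%:R in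
  (forall T : {set 'I_m}, (1 <= #|T|)%N ->
     #|T|%:R * a <= #|cols_meeting E T|%:R) /\
  (forall T : {set 'I_n}, (1 <= #|T|)%N ->
     #|T|%:R / a <= #|rows_meeting E T|%:R).
Proof.
move=> _ _ [phi /permutation_matching_injD [g g_inj g_idem]] a.
split=> T _; rewrite /a ?invf_div; apply: ler_nat_mul_ratio.
- rewrite [(_ * m)%N]mulnC; exact: (card_cols_meeting g_inj g_idem T).
- rewrite mulnC; exact: (card_rows_meeting g_inj g_idem T).
Qed.
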